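(* Under noiseless asynchronous updates, each of the squeezing codes $\mathsf{R}$, $\mathsf{F}$, $\mathsf{M}$ on the $L\times L$ torus has exactly the two configurations $s_+$ (all spins $+1$) and $s_-$ (all spins $-1$) as absorbing states; i.e. a configuration $s$ is left unchanged by every possible single-site update (of either the $\wedge$ or the $\vee$ type, at any site) if and only if $s\in\{s_+,s_-\}$.
   Context: Spins $s_{\mathbf r}\in\{+1,-1\}$ on $\mathbf r\in(\mathbb Z/L\mathbb Z)^2$ (periodic boundary conditions); $\hat{\mathbf x}=(1,0)$, $\hat{\mathbf y}=(0,1)$. Treat $+1$ as true and $-1$ as false, so $\wedge=\min$, $\vee=\max$. Each rule is given by two neighborhoods $\mathcal R^\wedge,\mathcal R^\vee$; a $\wedge$-update at site $\mathbf r$ replaces $s_{\mathbf r}$ by $\bigwedge_{\boldsymbol\delta\in\mathcal R^\wedge}s_{\mathbf r+\boldsymbol\delta}$, and a $\vee$-update replaces it by $\bigvee_{\boldsymbol\delta\in\mathcal R^\vee}s_{\mathbf r+\boldsymbol\delta}$. For $\mathsf{R}$: $\mathcal R^\wedge=\{\hat{\mathbf y},\mathbf 0,-\hat{\mathbf y}\}$, $\mathcal R^\vee=\{\hat{\mathbf x},\mathbf 0,-\hat{\mathbf x}\}$. For $\mathsf{F}$: $\mathcal R^\vee=\{\hat{\mathbf x},-\hat{\mathbf x}-\hat{\mathbf y}\}$, $\mathcal R^\wedge=\{\hat{\mathbf x}+\hat{\mathbf y},-\hat{\mathbf y}\}$. For $\mathsf{M}$: $\mathcal R^\vee=\{\hat{\mathbf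 x},\hat{\mathbf y}\}$, $\mathcal R^\wedge=\{\hat{\mathbf x},-\hat{\mathbf y}\}$. Noiseless asynchronous dynamics: sites are updated at times given by independent Poisson clocks, and each update is a $\wedge$-update or a $\vee$-update with probability $1/2$ each. A configuration is absorbing if no such update can change it. *)

From mathcomp Require Import all_boot all_order all_algebra.
Set Implicit Arguments. Unset Strict Implicit. Unset Printing Implicit Defensive.
Import GRing.Theory.
Local Open Scope ring_scope.

(* Sites of Z^2; a configuration on the torus (Z/LZ)^2 is represented as an
   L-periodic function on Z^2.  Spins: true = +1, false = -1, so that
   /\ = min = andb and \/ = max = orb. *)
Definition site := (int * int)%type.
Definition config := site -> bool.

Definition shift (r d : site) : site := (r.1 + d.1, r.2 + d.2).

Definition periodic (L : nat) (s : config) : Prop :=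
  forall x y : int, s (x + L%:Z, y) = s (x, y) /\ s (x, y + L%:Z) = s (x, y).

Inductive code := CodeR | CodeF | CodeM.

(* R^/\ neighborhood (offsets), with xhat = (1,0), yhat = (0,1). *)
Definition nbhd_and (c : code) : seq site :=
  match c with
  | CodeR => [:: (0, 1); (0, 0); (0, -1)]
  | CodeF => [:: (1, 1); (0, -1)]
  | CodeM => [:: (1, 0); (0, -1)]
  end.

Definition nbhd_or (c : code) : seq site :=
  match c with
  | CodeR => [:: (1, 0); (0, 0); (-1, 0)]
  | CodeF => [:: (1, 0); (-1, -1)]
  | CodeM => [:: (1, 0); (0, 1)]
  end.

Definition and_update (c : code) (s : config) (r : site) : bool :=
  all (fun d => s (shift r d)) (nbhd_and c).
Definition or_update (c : code) (s : config) (r : site) : bool :=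
  has (fun d => s (shift r d)) (nbhd_or c).

Definition absorbing (c : code) (s : config) : Prop :=
  forall r : site, and_update c s r = s r /\ or_update c s r = s r.

Definition s_plus : config := fun _ => true.
Definition s_minus : config := fun _ => false.

From mathcomp Require Import all_boot all_order all_algebra zify.
From Stdlib Require Import FunctionalExtensionality.
Set Implicit Arguments.
Unset Strict Implicit.
Unset Printing Implicit Defensive.
Import GRing.Theory Num.Theory.
Local Open Scope ring_scope.

(* In an absorbing configuration the set of + spins is closed under translation
   by every offset of R^/\ and the set of - spins under every offset of R^\/, so
   each set is closed under the cone (nonnegative combinations) of those offsets.
   A + spin at p and a - spin at q are thus incompatible as soon as p + t = q + f
   for some t in the first cone and f in the second.  For R and F the two cones
   already cover Z^2 in this sense; for M the + cone is only a ray, and the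
   period (0, L) of the torus supplies the missing direction. *)

Definition shift_closed (P : pred site) (d : site) : Prop :=
  forall r, P r -> P (shift r d).

Definition scale (n : int) (d : site) : site := (n * d.1, n * d.2).

Lemma shift_closed_scale P d n :
  shift_closed P d -> 0 <= n -> shift_closed P (scale n d).
Proof.
case: n => // n Pd _; elim: n => [|n IHn] r Pr.
  by move: Pr; rewrite /shift /scale /= !mul0r !addr0; case: r.
have := Pd _ (IHn _ Pr); rewrite /shift /scale /=.
by rewrite -addn1 PoszD !mulrDl !mul1r !addrA.
Qed.

Lemma shift_closed_shift P d e :
  shift_closed P d -> shift_closed P e -> shift_closed P (shift d e).
Proof. by move=> Pd Pe r /Pd /Pe; rewrite /shift /= !addrA. Qed.

Lemma shift_closed_cone P d1 d2 a b :
  shift_closed P d1 -> shift_closed P d2 -> 0 <= a -> 0 <= b ->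
  shift_closed P (shift (scale a d1) (scale b d2)).
Proof.
by move=> P1 P2 a0 b0; apply: shift_closed_shift; apply: shift_closed_scale.
Qed.

Definition cones_meet (d1 d2 e1 e2 : site) : Prop :=
  forall p q : site, exists a b c e : int,
    [/\ 0 <= a, 0 <= b, 0 <= c, 0 <= e &
        shift p (shift (scale a d1) (scale b d2)) =
        shift q (shift (scale c e1) (scale e e2))].

Lemma cones_meet_const (P : pred site) d1 d2 e1 e2 :
  shift_closed P d1 -> shift_closed P d2 ->
  shift_closed (predC P) e1 -> shift_closed (predC P) e2 ->
  cones_meet d1 d2 e1 e2 -> forall p q, P p -> P q.
Proof.
move=> P1 P2 N1 N2 meet p q Pp; apply/negPn/negP => Nq.
have [a [b [c [e [a0 b0 c0 e0 Epq]]]]] := meet p q.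
have := shift_closed_cone N1 N2 c0 e0 Nq.
by rewrite /= -Epq (shift_closed_cone P1 P2 a0 b0 Pp).
Qed.

Lemma cones_meet_R : cones_meet (0, 1) (0, -1) (1, 0) (-1, 0).
Proof.
move=> [p1 p2] [q1 q2].
exists `|q2 - p2|, (`|q2 - p2| - (q2 - p2)), `|p1 - q1|, (`|p1 - q1| - (p1 - q1)).
by split; try lia; rewrite /shift /scale /=; congr pair; lia.
Qed.

Lemma cones_meet_F : cones_meet (1, 1) (0, -1) (1, 0) (-1, -1).
Proof.
move=> [p1 p2] [q1 q2]; pose m := `|p1 - q1| + `|q2 - p2|.
exists (q1 + m - p1), (q1 + m - p1 - (q2 - p2)), m, 0.
by split; try lia; rewrite /shift /scale /=; congr pair; lia.
Qed.

Lemma cones_meet_M (L : nat) : (0 < L)%N -> cones_meet (1, 0) (0, L%:Z) (1, 0) (0, 1).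
Proof.
move=> L0 [p1 p2] [q1 q2].
exists `|q1 - p1|, `|q2 - p2|, (p1 + `|q1 - p1| - q1), (p2 + `|q2 - p2| * L%:Z - q2).
by split; try nia; rewrite /shift /scale /=; congr pair; nia.
Qed.

Section AbsorbingClosure.

Variables (c : code) (s : config).
Hypothesis abs : absorbing c s.

Lemma absorbing_and_closed d : d \in nbhd_and c -> shift_closed s d.
Proof.
move=> dc r sr; have [+ _] := abs r.
by rewrite /and_update sr => /allP; apply.
Qed.

Lemma absorbing_or_closed d : d \in nbhd_or c -> shift_closed (predC s) d.
Proof.
move=> dc r /= /negbTE sr; have [_ +] := abs r.
by rewrite /or_update sr => /hasPn; apply.
Qed.

End AbsorbingClosure.

Lemma periodic_shift_closed L s : periodic L s -> shift_closed s (0, L%:Z).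
Proof. by move=> per [x y]; rewrite /shift /= addr0 (proj2 (per x y)). Qed.

Lemma constant_config (s : config) :
  (forall p q, s p -> s q) -> s = s_plus \/ s = s_minus.
Proof.
move=> const; case s0: (s (0, 0)); [left | right]; apply: functional_extensionality.
  by move=> q; apply: const s0.
by move=> q; apply/negbTE/negP => /(const _ (0, 0)); rewrite s0.
Qed.

Theorem mainTheorem3 (L : nat) (hL : (0 < L)%N) (c : code) (s : config) :
  periodic L s -> (absorbing c s <-> s = s_plus \/ s = s_minus).
Proof.
move=> per; split=> [abs | [->|->]]; try by case: c; split.
apply: constant_config.
have T := absorbing_and_closed abs; have F := absorbing_or_closed abs.
case: c abs T F => _ T F.
- exact: (cones_meet_const (T (0, 1) isT) (T (0, -1) isT)
                           (F (1, 0) isT) (F (-1, 0) isT) cones_meet_R).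
- exact: (cones_meet_const (T (1, 1) isT) (T (0, -1) isT)
                           (F (1, 0) isT) (F (-1, -1) isT) cones_meet_F).
- exact: (cones_meet_const (T (1, 0) isT) (periodic_shift_closed per)
                           (F (1, 0) isT) (F (0, 1) isT) (cones_meet_M hL)).
Qed.
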